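(* For every graph $G$ and every integer $\ell\ge 0$, a set $B\subseteq V(G)$ is an $\ell$-leaky forcing set of $G$ if and only if it is a mixed $\ell$-leaky forcing set of $G$. In particular $\operatorname{Z}_{(\ell)}(G)=\operatorname{Z}^m_{(\ell)}(G)$.
   Context: All graphs are finite, simple and undirected. Zero forcing: a blue vertex $u$ with exactly one white neighbor $w$ may force $w$ (color it blue), written $u\to w$. A vertex leak is a vertex not allowed to perform any force; an edge leak is an edge $xy$ across which no force may be performed (neither $x\to y$ nor $y\to x$); a specified leak is an ordered pair $x\to y$ meaning $x$ may not force $y$. $B$ is an $\ell$-leaky forcing set if for every set of at most $\ell$ vertex leaks, exhaustively applying the forcing rule from initial blue set $B$ colors all of $V(G)$ blue; $B$ is a mixed $\ell$-leaky forcing set if the same holds for every set of at most $\ell$ leaks of any mix of the three kinds. $\operatorname{Z}_{(\ell)}(G)$ and $\operatorname{Z}^m_{(\ell)}(G)$ are the minimum sizes of an $\ell$-leaky forcing set and a mixed $\ell$-leaky forcing set, respectively. *)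

From mathcomp Require Import all_boot.
Set Implicit Arguments. Unset Strict Implicit. Unset Printing Implicit Defensive.

Section LeakyForcing.
Variable T : finType.
(* a graph on vertex set T: e is its (symmetric, irreflexive) adjacency relation *)
Variable e : rel T.

(* One round of the forcing rule, where [A u w] says whether the force u -> w
   is permitted: every white w that some blue u with exactly one white
   neighbour w is permitted to force becomes blue. *)
Definition force_step (A : rel T) (S : {set T}) : {set T} :=
  S :|: [set w | [exists u in S,
           [&& e u w, w \notin S, A u w &
               [forall v, (e u v && (v != w)) ==> (v \in S)]]]].

(* result of exhaustively applying the forcing rule from B
   (after #|T| rounds nothing can change any more) *)
Definition closure (A : rel T) (B : {set T}) : {set T} :=
  iter #|T| (force_step A) B.

Definition forces_all (A : rel T) (B : {set T}) : bool :=
  closure A B == setT.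

Definition vleak_allowed (L : {set T}) : rel T := fun u _ => u \notin L.

Definition leaky_forcing_set (l : nat) (B : {set T}) : bool :=
  [forall L : {set T}, (#|L| <= l) ==> forces_all (vleak_allowed L) B].

(* ---- mixed leaks ----
   inl (inl v)      : vertex leak at v
   inl (inr (x,y))  : edge leak on edge xy
   inr (x,y)        : specified leak x -> y  (xy an edge) *)
Definition leak := ((T + (T * T)) + (T * T))%type.

Definition valid_leak (x : leak) : bool :=
  match x with
  | inl (inl _) => true
  | inl (inr (a, b)) => e a b
  | inr (a, b) => e a b
  end.

Definition forbids (x : leak) (u w : T) : bool :=
  match x with
  | inl (inl v) => u == v
  | inl (inr (a, b)) => ((u == a) && (w == b)) || ((u == b) && (w == a))
  | inr (a, b) => (u == a) && (w == b)
  end.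

Definition mixed_allowed (L : {set leak}) : rel T :=
  fun u w => [forall x in L, ~~ forbids x u w].

Definition mixed_leaky_forcing_set (l : nat) (B : {set T}) : bool :=
  [forall L : {set leak},
     [&& #|L| <= l & [forall x in L, valid_leak x]] ==>
       forces_all (mixed_allowed L) B].

(* minimum sizes; setT is always such a set, so #|T| is a valid default *)
Definition Zleak (l : nat) : nat :=
  \big[minn/#|T|]_(B : {set T} | leaky_forcing_set l B) #|B|.

Definition Zmixed (l : nat) : nat :=
  \big[minn/#|T|]_(B : {set T} | mixed_leaky_forcing_set l B) #|B|.

End LeakyForcing.

From Pilot Require Import Defs.
From mathcomp Require Import all_boot.

(* Both notions are instances of forcing with a permission relation A (a force
   u -> w may only be performed when A u w), so we first develop a comparison
   principle for closures: the closure under A is a fixpoint of the forcing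
   step, and if every A'-permitted force crossing from the A-closure of B to
   its complement is also A-permitted, then "A' forces everything from B"
   implies "A forces everything from B".
   - Mixed leaks => vertex leaks: a set L of vertex leaks is the same as the
     set of vertex-type mixed leaks [inl (inl v) | v in L].
   - Vertex leaks => mixed leaks: given mixed leaks L and the closure C under
     them, charge each leak to one vertex of C (an edge leak to its endpoint
     in C, a specified leak x -> y to x); a force from C to outside C that
     violates a leak is performed by the charged vertex, so the at most |L|
     charged vertices, taken as vertex leaks, block all these forces. *)

Section Closure.
Variable T : finType.

(* Iterating an inflationary map on {set T} reaches a fixpoint after #|T|
   rounds: each non-stationary round strictly enlarges the set. *)
Lemma iter_inflationary_fixpoint (f : {set T} -> {set T}) (B : {set T}) :
  (forall S : {set T}, S \subset f S) -> f (iter #|T| f B) = iter #|T| f B.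
Proof.
move=> f_infl.
have grow_or_stop i : i <= #|iter i f B| \/ f (iter i f B) = iter i f B.
  elim: i => [|i [IH | fix_i]]; first by left.
  - have [fix_i | moved] := eqVneq (f (iter i f B)) (iter i f B).
      by right; rewrite /= fix_i fix_i.
    left; apply: leq_ltn_trans IH (proper_card _).
    by rewrite properEneq eq_sym moved f_infl.
  - by right; rewrite /= fix_i fix_i.
have [full | //] := grow_or_stop #|T|.
have -> : iter #|T| f B = setT by apply/eqP; rewrite eqEcard subsetT cardsT.
by apply/eqP; rewrite eqEsubset subsetT f_infl.
Qed.

Variable e : rel T.

Lemma force_step_grows (A : rel T) (S : {set T}) : S \subset force_step e A S.
Proof. exact: subsetUl. Qed.

Lemma closure_grows (A : rel T) (B : {set T}) : B \subset Defs.closure e A B.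
Proof.
rewrite /Defs.closure; elim: #|T| => //= n IH.
exact: subset_trans IH (force_step_grows _ _).
Qed.

Lemma closure_stable (A : rel T) (B : {set T}) :
  force_step e A (Defs.closure e A B) = Defs.closure e A B.
Proof. exact/iter_inflationary_fixpoint/force_step_grows. Qed.

Lemma closure_sub_stable (A A' : rel T) (B C : {set T}) :
  force_step e A C = C -> B \subset C ->
  (forall u w, u \in C -> w \notin C -> A' u w -> A u w) ->
  Defs.closure e A' B \subset C.
Proof.
move=> stableC BC boundary; rewrite /Defs.closure; elim: #|T| => //= n IH.
apply/subsetP => w; rewrite in_setU => /orP [/(subsetP IH) // |].
rewrite inE => /existsP [u /andP [uS /and4P [euw wS A'uw others_blue]]].
apply/idPn => wC.
have uC : u \in C := subsetP IH u uS.
have : w \in force_step e A C; last by rewrite stableC (negbTE wC).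
rewrite in_setU (negbTE wC) inE; apply/existsP; exists u.
rewrite uC euw wC (boundary u w uC wC A'uw) /=.
apply/forallP => v; apply/implyP => /(implyP (forallP others_blue v)).
exact: (subsetP IH).
Qed.

Lemma forces_all_transfer (A A' : rel T) (B : {set T}) :
  (forall u w, u \in Defs.closure e A B -> w \notin Defs.closure e A B ->
     A' u w -> A u w) ->
  forces_all e A' B -> forces_all e A B.
Proof.
move=> boundary /eqP full'; rewrite /forces_all eqEsubset subsetT /= -full'.
exact: closure_sub_stable (closure_stable _ _) (closure_grows _ _) boundary.
Qed.

Lemma forces_all_mono (A A' : rel T) (B : {set T}) :
  (forall u w, A' u w -> A u w) -> forces_all e A' B -> forces_all e A B.
Proof. by move=> sub; apply: forces_all_transfer => u w _ _ /sub. Qed.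

End Closure.

Section LeakTranslation.
Variable T : finType.
Variable e : rel T.

Definition vertex_leaks (L : {set T}) : {set leak T} := [set inl (inl v) | v in L].

Lemma card_vertex_leaks (L : {set T}) : #|vertex_leaks L| = #|L|.
Proof. by apply: card_imset => x y [->]. Qed.

Lemma vertex_leaks_valid (L : {set T}) :
  [forall x in vertex_leaks L, valid_leak e x].
Proof. by apply/forallP => x; apply/implyP => /imsetP [v _ ->]. Qed.

Lemma mixed_allowed_vertex_leaks (L : {set T}) (u w : T) :
  mixed_allowed (vertex_leaks L) u w = vleak_allowed L u w.
Proof.
apply/forallP/idP => [blocks | uL x].
  by apply/negP => uL; have := blocks (inl (inl u)); rewrite imset_f //= eqxx.
by apply/implyP => /imsetP [v vL ->] /=; apply: contra uL => /eqP ->.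
Qed.

Definition charged_vertex (C : {set T}) (x : leak T) : T :=
  match x with
  | inl (inl v) => v
  | inl (inr (a, b)) => if a \in C then a else b
  | inr (a, b) => a
  end.

Lemma forbids_charged (C : {set T}) (x : leak T) (u w : T) :
  u \in C -> w \notin C -> forbids x u w -> charged_vertex C x = u.
Proof.
move=> uC wC; case: x => [[v | [a b]] | [a b]] /=.
- by move/eqP.
- case/orP => /andP [/eqP ua /eqP wb]; subst; first by rewrite uC.
  by rewrite (negbTE wC).
- by case/andP => /eqP.
Qed.

Lemma mixed_allowed_charged (C : {set T}) (L : {set leak T}) (u w : T) :
  u \in C -> w \notin C ->
  vleak_allowed (charged_vertex C @: L) u w -> mixed_allowed L u w.
Proof.
move=> uC wC uL; apply/forallP => x; apply/implyP => xL.
by apply: contra uL => /(@forbids_charged C x u w uC wC) <-; apply: imset_f.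
Qed.

Lemma leaky_mixed (l : nat) (B : {set T}) :
  leaky_forcing_set e l B -> mixed_leaky_forcing_set e l B.
Proof.
move=> /forallP vleaky; apply/forallP => L; apply/implyP => /andP [cardL _].
set C := Defs.closure e (mixed_allowed L) B.
have card_charged : #|charged_vertex C @: L| <= l.
  exact: leq_trans (leq_imset_card _ _) cardL.
apply: forces_all_transfer (implyP (vleaky _) card_charged).
exact: mixed_allowed_charged.
Qed.

Lemma mixed_leaky (l : nat) (B : {set T}) :
  mixed_leaky_forcing_set e l B -> leaky_forcing_set e l B.
Proof.
move=> /forallP mleaky; apply/forallP => L; apply/implyP => cardL.
have := implyP (mleaky (vertex_leaks L)).
rewrite card_vertex_leaks cardL vertex_leaks_valid => /(_ isT).
by apply: forces_all_mono => u w; rewrite mixed_allowed_vertex_leaks.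
Qed.

End LeakTranslation.

Theorem corollary4p3 (T : finType) (e : rel T)
  (e_sym : symmetric e) (e_irr : irreflexive e) (l : nat) :
  (forall B : {set T},
      leaky_forcing_set e l B <-> mixed_leaky_forcing_set e l B)
  /\ Zleak e l = Zmixed e l.
Proof.
have leaky_iff_mixed B :
    leaky_forcing_set e l B <-> mixed_leaky_forcing_set e l B.
  by split; [exact: leaky_mixed | exact: mixed_leaky].
split => //; apply: eq_bigl => B.
by apply/idP/idP => /leaky_iff_mixed.
Qed.
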